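(* Let $n \ge 2$ be an integer, let $\varepsilon > 0$, and let $p_s, p_{is}, p_d, p_{id}, p_m, p_{im}, p_{ic} \in (0,1]$. Define \[ P_{\mathrm{all}} = p_s\, p_{is}^{\,n-1}\, p_d^{\,n-1}\, p_{id}^{\,n(\lceil \log_2 n\rceil - 2) + 2}, \qquad P_{\mathrm{lin}} = p_s\, p_{is}^{\,n-1}\, p_d^{\,n-1}\, p_{id}^{\,n(\lceil n/2\rceil - 2) + 2}, \] and let $P_{\mathrm{ad}}$ be a real number satisfying \[ P_{\mathrm{ad}} \ge p_s^{\,n+\lfloor n/2\rfloor}\, p_{is}^{\,n+\lceil n/2\rceil - 1}\, p_d^{\,2(n-1)}\, p_{id}^{\,2}\, p_m^{\,n-1}\, p_{im}^{\,n}\, p_{ic}^{\,n}. \] Assume the first-order identifications $p_s = p_{is} = 1$, $p_m = p_d$, and $p_{im} = p_{ic} = p_{id}$. Then: (i) if $p_d \ge (1+\varepsilon)\, p_{id}^{\frac{n}{n-1}\left(\lceil \log_2 n\rceil/2 - 2\right)}$, then $P_{\mathrm{ad}} \ge (1+\varepsilon)^{2(n-1)} P_{\mathrm{all}}$; (ii) if $p_d \ge (1+\varepsilon)\, p_{id}^{\frac{n}{n-1}\left(\lceil n/2\rceil/2 - 2\right)}$, then $P_{\mathrm{ad}} \ge (1+\varepsilon)^{2(n-1)} P_{\mathrm{lin}}$.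
   Context: Setting: preparation of the $n$-qubit GHZ state $\frac{1}{\sqrt 2}(|0\rangle^{\otimes n} + |1\rangle^{\otimes n})$ under a worst-case error model in which every error (in a gate, an idle period, or a measurement) makes the final state incorrect and errors never cancel. The parameters are: $p_s$ = probability a single-qubit gate succeeds; $p_d$ = probability a two-qubit (CNOT) gate succeeds; $p_m$ = probability a measurement returns the correct value; $p_{is}$, $p_{id}$, $p_{im}$, $p_{ic}$ = probability a qubit remains coherent while idling during a single-qubit gate, a two-qubit gate, a measurement, and an intermediate classical computation, respectively. $P_{\mathrm{all}}$ is the success probability of the non-adaptive protocol with all-to-all connectivity (Hadamard on one qubit, then $\lceil\log_2 n\rceil$ layers of CNOTs, doubling the number of entangled qubits each layer); $P_{\mathrm{lin}}$ is that of the non-adaptive protocol with linear nearest-neighbor connectivity (Hadamard on a middle qubit, then CNOT layers spreading outward two qubits per layer); $P_{\mathrm{ad}}$ is the success probability of the constant-depth adaptive protocol on $2n-1$ qubits (Hadamards, two layers of CNOTs onto $n-1$ auxiliary qubits, measurement of the auxiliaries, then Pauli-$X$ corrections determined by prefix parities of the outcomes). The paper writes such comparisons with $\gtrsim$, meaning the inequality holds after applying the first-order assumptions $p_s \approx 1 \approx p_{is}$, $p_d \approx p_m$, $p_{id} \approx p_{im} \approx p_{ic}$; here these are imposed as equalities. *)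

From Stdlib Require Import Reals ZArith Arith.
Open Scope R_scope.

Definition clog2 (n : nat) : nat := Nat.log2_up n.
Definition ceil_half (n : nat) : nat := Nat.div (n + 1) 2.
Definition floor_half (n : nat) : nat := Nat.div n 2.

Definition P_all (n : nat) (ps pis pd pid : R) : R :=
  ps * pis ^ (n - 1) * pd ^ (n - 1) *
  powerRZ pid (Z.of_nat n * (Z.of_nat (clog2 n) - 2) + 2)%Z.

Definition P_lin (n : nat) (ps pis pd pid : R) : R :=
  ps * pis ^ (n - 1) * pd ^ (n - 1) *
  powerRZ pid (Z.of_nat n * (Z.of_nat (ceil_half n) - 2) + 2)%Z.

Definition P_ad_lb (n : nat) (ps pis pd pid pm pim pic : R) : R :=
  ps ^ (n + floor_half n) * pis ^ (n + ceil_half n - 1) * pd ^ (2 * (n - 1)) *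
  pid ^ 2 * pm ^ (n - 1) * pim ^ n * pic ^ n.

(** Under the first-order identifications the adaptive bound is
    [pd^(3(n-1)) pid^(2n+2)], while a non-adaptive protocol of CNOT depth [k]
    succeeds with probability [pd^(n-1) pid^(n(k-2)+2)].  Their quotient is
    [pd^(2(n-1)) pid^(-n(k-4))], and raising the hypothesis on [pd] to the
    power [2(n-1)] says exactly that this quotient is at least
    [(1+eps)^(2(n-1))].  The two claims are the cases [k = ceil(log2 n)] and
    [k = ceil(n/2)]. *)

From Stdlib Require Import Reals ZArith Arith Lra Lia.
Open Scope R_scope.

Lemma Rpower_bound_pow (N : nat) (x c y a : R) :
  0 < c -> 0 < y -> x >= c * Rpower y a ->
  x ^ N >= c ^ N * Rpower y (INR N * a).
Proof.
  intros Hc Hy Hx.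
  assert (Hpos : 0 < Rpower y a) by apply exp_pos.
  rewrite (Rmult_comm (INR N) a), <- Rpower_mult, Rpower_pow by exact Hpos.
  rewrite <- Rpow_mult_distr.
  apply Rle_ge, pow_incr; split; [nra | lra].
Qed.

Lemma powerRZ_depth_split (n k : nat) (y : R) :
  0 < y ->
  powerRZ y (Z.of_nat n * (Z.of_nat k - 2) + 2)%Z =
  Rpower y (INR n * (INR k - 4)) * y ^ (2 * n + 2).
Proof.
  intros Hy.
  rewrite powerRZ_Rpower, <- Rpower_pow, <- Rpower_plus by exact Hy.
  f_equal.
  rewrite plus_IZR, mult_IZR, minus_IZR, <- !INR_IZR_INZ, plus_INR, mult_INR.
  simpl; ring.
Qed.

Lemma P_ad_lb_first_order (n : nat) (pd pid : R) :
  P_ad_lb n 1 1 pd pid pd pid pid = pd ^ (3 * (n - 1)) * pid ^ (2 * n + 2).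
Proof.
  unfold P_ad_lb.
  replace (3 * (n - 1))%nat with (2 * (n - 1) + (n - 1))%nat by lia.
  replace (2 * n + 2)%nat with (2 + n + n)%nat by lia.
  rewrite !pow_add, !pow1; ring.
Qed.

Lemma adaptive_gain (n k : nat) (eps pd pid Pad : R) :
  (2 <= n)%nat -> 0 < eps -> 0 < pd -> 0 < pid ->
  Pad >= pd ^ (3 * (n - 1)) * pid ^ (2 * n + 2) ->
  pd >= (1 + eps) * Rpower pid (INR n / INR (n - 1) * (INR k / 2 - 2)) ->
  Pad >= (1 + eps) ^ (2 * (n - 1)) *
         (pd ^ (n - 1) * powerRZ pid (Z.of_nat n * (Z.of_nat k - 2) + 2)%Z).
Proof.
  intros Hn Heps Hpd Hpid HPad Hgap.
  assert (Hm : INR (n - 1) <> 0) by (apply not_0_INR; lia).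
  pose proof (Rpower_bound_pow (2 * (n - 1)) pd (1 + eps) pid _ ltac:(lra) Hpid Hgap) as Hsq.
  replace (INR (2 * (n - 1)) * (INR n / INR (n - 1) * (INR k / 2 - 2)))
    with (INR n * (INR k - 4)) in Hsq by (rewrite mult_INR; simpl; field; exact Hm).
  rewrite powerRZ_depth_split by exact Hpid.
  replace (3 * (n - 1))%nat with (2 * (n - 1) + (n - 1))%nat in HPad by lia.
  rewrite pow_add in HPad.
  assert (Hrest : 0 < pd ^ (n - 1) * pid ^ (2 * n + 2))
    by (apply Rmult_lt_0_compat; apply pow_lt; assumption).
  apply Rge_trans with (1 := HPad).
  apply Rle_ge.
  replace (pd ^ (2 * (n - 1)) * pd ^ (n - 1) * pid ^ (2 * n + 2))
    with (pd ^ (2 * (n - 1)) * (pd ^ (n - 1) * pid ^ (2 * n + 2))) by ring.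
  replace ((1 + eps) ^ (2 * (n - 1)) *
           (pd ^ (n - 1) * (Rpower pid (INR n * (INR k - 4)) * pid ^ (2 * n + 2))))
    with ((1 + eps) ^ (2 * (n - 1)) * Rpower pid (INR n * (INR k - 4)) *
          (pd ^ (n - 1) * pid ^ (2 * n + 2))) by ring.
  apply Rmult_le_compat_r; lra.
Qed.

Theorem theorem1 (n : nat) (eps ps pis pd pid pm pim pic Pad : R) :
  (2 <= n)%nat -> 0 < eps ->
  0 < ps <= 1 -> 0 < pis <= 1 -> 0 < pd <= 1 -> 0 < pid <= 1 ->
  0 < pm <= 1 -> 0 < pim <= 1 -> 0 < pic <= 1 ->
  Pad >= P_ad_lb n ps pis pd pid pm pim pic ->
  ps = 1 -> pis = 1 -> pm = pd -> pim = pid -> pic = pid ->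
  (pd >= (1 + eps) * Rpower pid (INR n / INR (n - 1) * (INR (clog2 n) / 2 - 2)) ->
   Pad >= (1 + eps) ^ (2 * (n - 1)) * P_all n ps pis pd pid) /\
  (pd >= (1 + eps) * Rpower pid (INR n / INR (n - 1) * (INR (ceil_half n) / 2 - 2)) ->
   Pad >= (1 + eps) ^ (2 * (n - 1)) * P_lin n ps pis pd pid).
Proof.
  intros Hn Heps _ _ [Hpd _] [Hpid _] _ _ _ HPad -> -> -> -> ->.
  rewrite P_ad_lb_first_order in HPad.
  unfold P_all, P_lin; rewrite pow1, !Rmult_1_l.
  split; apply adaptive_gain; assumption.
Qed.
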